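(* Let $S\subset\mathbb{R}^3$ be a surface foliated by circles (or arcs of circles) contained in planes parallel to the $xy$-plane, and let $\phi(x,y,z)=z$. Suppose that the $\phi$-mean curvature $H_\phi$ of $S$ is a nonzero constant. Then $S$ is a surface of revolution whose axis is parallel to the $z$-axis.
   Context: For a smooth oriented surface $S$ with unit normal $N=(N_1,N_2,N_3)$, $H$ is the mean curvature normalized so that the mean curvature vector is $\Delta_S X=2HN$. For the density $e^{\phi}$ with $\phi(x,y,z)=z$, the $\phi$-mean curvature is $H_\phi=H-\tfrac12\frac{d\phi}{dN}=H-\tfrac12 N_3$. Locally such an $S$ is parametrized as $X(s,t)=(a(s),b(s),s)+r(s)(\cos t,\sin t,0)$ with $a,b,r$ smooth, $r>0$, $t$ in an interval. The result is local. *)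

From Stdlib Require Export Reals.
Open Scope R_scope.

Record R3 := mkR3 { v1 : R; v2 : R; v3 : R }.

Definition dot (u v : R3) : R := v1 u * v1 v + v2 u * v2 v + v3 u * v3 v.
Definition cross (u v : R3) : R3 :=
  mkR3 (v2 u * v3 v - v3 u * v2 v)
       (v3 u * v1 v - v1 u * v3 v)
       (v1 u * v2 v - v2 u * v1 v).
Definition vnorm (u : R3) : R := sqrt (dot u u).
Definition vscale (k : R) (u : R3) : R3 := mkR3 (k * v1 u) (k * v2 u) (k * v3 u).

Definition smooth_on (f : R -> R) (lo hi : R) : Prop :=
  exists D : nat -> R -> R,
    (forall x, D O x = f x) /\
    (forall (n : nat) (x : R), lo < x < hi -> derivable_pt_lim (D n) x (D (S n) x)).

Definition partial_s (X : R -> R -> R3) (s t : R) (v : R3) : Prop :=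
  derivable_pt_lim (fun u => v1 (X u t)) s (v1 v) /\
  derivable_pt_lim (fun u => v2 (X u t)) s (v2 v) /\
  derivable_pt_lim (fun u => v3 (X u t)) s (v3 v).

Definition partial_t (X : R -> R -> R3) (s t : R) (v : R3) : Prop :=
  derivable_pt_lim (fun u => v1 (X s u)) t (v1 v) /\
  derivable_pt_lim (fun u => v2 (X s u)) t (v2 v) /\
  derivable_pt_lim (fun u => v3 (X s u)) t (v3 v).

Definition unit_normal (Xs Xt : R3) : R3 :=
  vscale (/ vnorm (cross Xs Xt)) (cross Xs Xt).

(* Mean curvature, normalized so that Delta_S X = 2 H N:
   H = (e G - 2 f F + g E) / (2 (E G - F^2)). *)
Definition mean_curv (Xs Xt Xss Xst Xtt : R3) : R :=
  let N := unit_normal Xs Xt in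
  let E := dot Xs Xs in let F := dot Xs Xt in let G := dot Xt Xt in
  let e := dot Xss N in let f := dot Xst N in let g := dot Xtt N in
  (e * G - 2 * f * F + g * E) / (2 * (E * G - F * F)).

Definition phi_mean_curv (Xs Xt Xss Xst Xtt : R3) : R :=
  mean_curv Xs Xt Xss Xst Xtt - / 2 * v3 (unit_normal Xs Xt).

Definition circ_param (a b r : R -> R) (s t : R) : R3 :=
  mkR3 (a s + r s * cos t) (b s + r s * sin t) s.

From Stdlib Require Import Reals Lra Lia Nsatz FunctionalExtensionality Classical_Prop.
Open Scope R_scope.

(* Along the circle at height [s] put [p = a'(s)], [q = b'(s)] and [u = p cos t + q sin t + r'(s)].
   In this parametrization [H_phi = c] becomes the identity in [t]
     [|X_s|^2 - r (a'' cos t + b'' sin t + r'') - r u (1 + u^2) = 2 c r (1 + u^2)^(3/2)].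
   If [(p, q) = rho (cos al, sin al)] with [rho > 0], squaring it and writing [X = cos (t - al)],
   [Y = sin (t - al)] gives [G0(X) + Y G1(X) = 0] for polynomials [G0], [G1]; holding on an
   interval, this forces [G0 = G1 = 0] identically, and the resulting polynomial identities force
   [c = 0].  Hence [a' = b' = 0]: the centres of the circles lie on a vertical line. *)

Lemma derive_eq0_of_locally_const f x l lo hi k :
  lo < x < hi -> (forall y, lo < y < hi -> f y = k) ->
  derivable_pt_lim f x l -> l = 0.
Proof.
  intros Hx Hk Hd. apply (uniqueness_limite f x); [exact Hd |].
  apply derivable_pt_lim_locally_ext with (fun _ => k) lo hi; auto.
  - intros y Hy; symmetry; auto.
  - apply derivable_pt_lim_const.
Qed.

Lemma const_of_derive_0 f f' lo hi :
  (forall x, lo < x < hi -> derivable_pt_lim f x (f' x)) ->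
  (forall x, lo < x < hi -> f' x = 0) ->
  forall x y, lo < x < hi -> lo < y < hi -> f x = f y.
Proof.
  intros Hd H0.
  assert (Hlt : forall x y, lo < x -> x < y -> y < hi -> f x = f y).
  { intros x y Hx Hxy Hy.
    destruct (MVT_cor2 f f' x y Hxy) as [z [Hz Hzxy]].
    - intros z Hz; apply Hd; lra.
    - rewrite H0 in Hz by lra. lra. }
  intros x y Hx Hy.
  destruct (Rtotal_order x y) as [H | [-> | H]]; [apply Hlt | | symmetry; apply Hlt]; auto; lra.
Qed.

Inductive poly_deg_le : nat -> (R -> R) -> Prop :=
  | poly_deg_le_const c : poly_deg_le 0 (fun _ => c)
  | poly_deg_le_horner n f c : poly_deg_le n f -> poly_deg_le (S n) (fun x => x * f x + c).

Lemma poly_deg_le_ext n f g : poly_deg_le n f -> (forall x, f x = g x) -> poly_deg_le n g.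
Proof. intros Hf E. replace g with f by (apply functional_extensionality; exact E). exact Hf. Qed.

Lemma poly_deg_le_S n f : poly_deg_le n f -> poly_deg_le (S n) f.
Proof.
  induction 1 as [c | n f c _ IH].
  - apply poly_deg_le_ext with (fun x => x * 0 + c).
    + exact (poly_deg_le_horner 0 (fun _ => 0) c (poly_deg_le_const 0)).
    + intros; ring.
  - now constructor.
Qed.

Lemma poly_deg_le_weaken n m f : (n <= m)%nat -> poly_deg_le n f -> poly_deg_le m f.
Proof. intros Hnm; induction Hnm; auto using poly_deg_le_S. Qed.

Lemma poly_deg_le_scal n k f : poly_deg_le n f -> poly_deg_le n (fun x => k * f x).
Proof.
  induction 1 as [c | n f c _ IH].
  - constructor.
  - apply poly_deg_le_ext with (fun x => x * (k * f x) + k * c).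
    + exact (poly_deg_le_horner _ _ _ IH).
    + intros; ring.
Qed.

Lemma poly_deg_le_plus n f g :
  poly_deg_le n f -> poly_deg_le n g -> poly_deg_le n (fun x => f x + g x).
Proof.
  intros Hf; revert g; induction Hf as [c | n f c _ IH]; intros g Hg;
    inversion Hg as [d | k h d Hh]; subst.
  - constructor.
  - apply poly_deg_le_ext with (fun x => x * (f x + h x) + (c + d)).
    + exact (poly_deg_le_horner _ _ _ (IH _ Hh)).
    + intros; ring.
Qed.

Lemma poly_deg_le_mult n m f g :
  poly_deg_le n f -> poly_deg_le m g -> poly_deg_le (n + m) (fun x => f x * g x).
Proof.
  intros Hf; revert m g; induction Hf as [c | n f c _ IH]; intros m g Hg.
  - exact (poly_deg_le_scal _ c _ Hg).
  - apply poly_deg_le_ext with (fun x => (x * (f x * g x) + 0) + c * g x).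
    + apply poly_deg_le_plus.
      * exact (poly_deg_le_horner _ _ _ (IH _ _ Hg)).
      * apply poly_deg_le_scal, (poly_deg_le_weaken m); [lia | exact Hg].
    + intros; ring.
Qed.

Lemma poly_deg_le_id : poly_deg_le 1 (fun x => x).
Proof.
  apply poly_deg_le_ext with (fun x => x * 1 + 0).
  - exact (poly_deg_le_horner 0 (fun _ => 1) 0 (poly_deg_le_const 1)).
  - intros; ring.
Qed.

Lemma poly_deg_le_derive n f : poly_deg_le n f ->
  exists f', (forall x, derivable_pt_lim f x (f' x)) /\ poly_deg_le (pred n) f'.
Proof.
  induction 1 as [c | n f c Hf [g [Hg Ig]]].
  - exists (fun _ => 0). split; [intros; apply derivable_pt_lim_const | constructor].
  - exists (fun x => f x + x * g x). split.
    + intros x. replace (f x + x * g x) with ((1 * f x + x * g x) + 0) by ring.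
      apply (derivable_pt_lim_plus (fun x => x * f x) (fun _ => c)).
      * apply (derivable_pt_lim_mult id f); [apply derivable_pt_lim_id | apply Hg].
      * apply derivable_pt_lim_const.
    + destruct n as [| n]; simpl.
      * inversion Hf as [c0 E |]; subst.
        assert (Hg0 : forall x, g x = 0).
        { intros x. apply (uniqueness_limite (fun _ => c0) x); [apply Hg | apply derivable_pt_lim_const]. }
        apply poly_deg_le_ext with (fun _ => c0); [constructor | intros x; rewrite Hg0; ring].
      * apply poly_deg_le_plus; [exact Hf |].
        apply poly_deg_le_ext with (fun x => x * g x + 0); [constructor; exact Ig | intros; ring].
Qed.

Lemma poly_deg_le_eq0 n f lo hi : poly_deg_le n f -> lo < hi ->
  (forall x, lo < x < hi -> f x = 0) -> forall x, f x = 0.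
Proof.
  set (m := (lo + hi) / 2).
  revert f; induction n as [| n IH]; intros f Hf Hlh Hz x.
  - inversion Hf; subst. apply (Hz m); unfold m; lra.
  - destruct (poly_deg_le_derive _ _ Hf) as [f' [Hd Hf']].
    assert (Hf'0 : forall y, f' y = 0).
    { apply (IH f' Hf' Hlh). intros y Hy.
      exact (derive_eq0_of_locally_const f y (f' y) lo hi 0 Hy Hz (Hd y)). }
    rewrite <- (Hz m) by (unfold m; lra).
    pose proof (Rmin_l x m); pose proof (Rmin_r x m).
    pose proof (Rmax_l x m); pose proof (Rmax_r x m).
    apply (const_of_derive_0 f f' (Rmin x m - 1) (Rmax x m + 1)); auto; lra.
Qed.

Definition is_poly (f : R -> R) : Prop := exists n, poly_deg_le n f.

Lemma is_poly_id : is_poly (fun x => x).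
Proof. exists 1%nat; exact poly_deg_le_id. Qed.

Lemma is_poly_const c : is_poly (fun _ => c).
Proof. exists 0%nat; constructor. Qed.

Lemma is_poly_plus f g : is_poly f -> is_poly g -> is_poly (fun x => f x + g x).
Proof.
  intros [n Hf] [m Hg]; exists (n + m)%nat.
  apply poly_deg_le_plus; [apply (poly_deg_le_weaken n) | apply (poly_deg_le_weaken m)];
    auto; lia.
Qed.

Lemma is_poly_mult f g : is_poly f -> is_poly g -> is_poly (fun x => f x * g x).
Proof. intros [n Hf] [m Hg]; exists (n + m)%nat; exact (poly_deg_le_mult _ _ _ _ Hf Hg). Qed.

Lemma is_poly_opp f : is_poly f -> is_poly (fun x => - f x).
Proof.
  intros [n Hf]; exists n.
  apply poly_deg_le_ext with (fun x => -1 * f x); [apply poly_deg_le_scal, Hf | intros; ring].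
Qed.

Lemma is_poly_minus f g : is_poly f -> is_poly g -> is_poly (fun x => f x - g x).
Proof. intros; apply is_poly_plus; [| apply is_poly_opp]; assumption. Qed.

Lemma is_poly_eq0 f lo hi : is_poly f -> lo < hi ->
  (forall x, lo < x < hi -> f x = 0) -> forall x, f x = 0.
Proof. intros [n Hf]; exact (poly_deg_le_eq0 n f lo hi Hf). Qed.

Ltac is_poly_tac :=
  repeat first [ apply is_poly_id | apply is_poly_const | apply is_poly_plus | apply is_poly_minus
               | apply is_poly_mult | apply is_poly_opp ].

Lemma is_poly_eq0_on_image P X ta tb : is_poly P -> continuity X -> ta < tb -> X ta <> X tb ->
  (forall t, ta <= t <= tb -> P (X t) = 0) -> forall z, P z = 0.
Proof.
  intros HP HX Hab Hne Hz.
  apply (is_poly_eq0 P (Rmin (X ta) (X tb)) (Rmax (X ta) (X tb)) HP).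
  { unfold Rmin, Rmax; destruct (Rle_dec (X ta) (X tb)); lra. }
  intros z Hzr.
  destruct (IVT_cor (fun t => X t - z) ta tb) as [t [Ht Hxt]].
  - apply continuity_minus; [exact HX | apply continuity_const; intros ? ?; reflexivity].
  - lra.
  - unfold Rmin, Rmax in Hzr; destruct (Rle_dec (X ta) (X tb)); nra.
  - replace z with (X t) by lra. apply Hz, Ht.
Qed.

Section RotatedCircle.

Variables (X Y : R -> R).
Hypothesis XY_unit : forall t, X t * X t + Y t * Y t = 1.
Hypothesis derive_X : forall t, derivable_pt_lim X t (- Y t).
Hypothesis derive_Y : forall t, derivable_pt_lim Y t (X t).

Lemma rotation_nonconst t0 t1 : t0 < t1 ->
  exists ta tb, t0 < ta < t1 /\ t0 < tb < t1 /\ ta < tb /\ X ta <> X tb.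
Proof.
  intros Ht. set (m := (t0 + t1) / 2). assert (Hm : t0 < m < t1) by (unfold m; lra).
  assert (Hex : exists t, t0 < t < t1 /\ X t <> X m).
  { apply NNPP; intros Hno.
    assert (Xc : forall t, t0 < t < t1 -> X t = X m).
    { intros t Ht'. apply NNPP; intros Hne. apply Hno; exists t; auto. }
    assert (Y0 : forall t, t0 < t < t1 -> Y t = 0).
    { intros t Ht'.
      pose proof (derive_eq0_of_locally_const X t (- Y t) t0 t1 (X m) Ht' Xc (derive_X t)). lra. }
    pose proof (derive_eq0_of_locally_const Y m (X m) t0 t1 0 Hm Y0 (derive_Y m)) as Xm0.
    pose proof (XY_unit m). rewrite Xm0, (Y0 m Hm) in *. lra. }
  destruct Hex as [t [Ht' Hne]].
  destruct (Rtotal_order t m) as [Hlt | [-> | Hgt]]; [| congruence |].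
  - exists t, m; auto.
  - exists m, t; auto.
Qed.

(* Vanishing of [G0(X) + Y G1(X)] on an interval forces [H := G0^2 - (1 - z^2) G1^2] to vanish
   on a nondegenerate interval, hence everywhere; for [z > 1] both terms of [H] are then zero. *)
Lemma poly_pair_eq0_on_rotation G0 G1 t0 t1 : is_poly G0 -> is_poly G1 -> t0 < t1 ->
  (forall t, t0 < t < t1 -> G0 (X t) + Y t * G1 (X t) = 0) ->
  forall z, G0 z = 0 /\ G1 z = 0.
Proof.
  intros P0 P1 Ht Hid.
  assert (cX : continuity X).
  { intros t. apply (derivable_continuous_pt X t (exist _ _ (derive_X t))). }
  destruct (rotation_nonconst t0 t1 Ht) as [ta [tb [Ha [Hb [Hab Hne]]]]].
  set (H := fun z => G0 z * G0 z - (1 - z * z) * (G1 z * G1 z)).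
  assert (H0 : forall z, H z = 0).
  { apply (is_poly_eq0_on_image H X ta tb); auto.
    - unfold H; is_poly_tac; auto.
    - intros t Ht'. pose proof (Hid t ltac:(lra)). pose proof (XY_unit t). unfold H.
      replace (G0 (X t)) with (- Y t * G1 (X t)) by lra.
      replace (1 - X t * X t) with (Y t * Y t) by lra. ring. }
  assert (Hbig : forall z, 1 < z -> G0 z = 0 /\ G1 z = 0).
  { intros z Hz. pose proof (H0 z) as Hz0. unfold H in Hz0.
    assert (S0 : 0 <= G0 z * G0 z) by apply Rle_0_sqr.
    assert (S1 : 0 <= (z * z - 1) * (G1 z * G1 z)) by (apply Rmult_le_pos; [nra | apply Rle_0_sqr]).
    assert (E0 : G0 z * G0 z = 0) by lra.
    assert (E1 : (z * z - 1) * (G1 z * G1 z) = 0) by lra.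
    apply Rmult_integral in E1 as [E1 | E1]; [nra |].
    split; [destruct (Rmult_integral _ _ E0) | destruct (Rmult_integral _ _ E1)]; auto. }
  intros z; split; [apply (is_poly_eq0 G0 1 2) | apply (is_poly_eq0 G1 1 2)];
    auto; try lra; intros; apply Hbig; lra.
Qed.

End RotatedCircle.

Lemma cos_sin_unit t : cos t * cos t + sin t * sin t = 1.
Proof. pose proof (sin2_cos2 t) as E; unfold Rsqr in E; lra. Qed.

Lemma poly_pair_eq0_on_arc G0 G1 ca sa t0 t1 :
  is_poly G0 -> is_poly G1 -> ca * ca + sa * sa = 1 -> t0 < t1 ->
  (forall t, t0 < t < t1 ->
     G0 (ca * cos t + sa * sin t) + (- sa * cos t + ca * sin t) * G1 (ca * cos t + sa * sin t) = 0) ->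
  forall z, G0 z = 0 /\ G1 z = 0.
Proof.
  intros P0 P1 Hcs Ht Hid.
  set (X := fun t => ca * cos t + sa * sin t).
  set (Y := fun t => - sa * cos t + ca * sin t).
  assert (XY_unit : forall t, X t * X t + Y t * Y t = 1).
  { intros t. unfold X, Y; cbv beta. pose proof (cos_sin_unit t) as Hu. clear - Hcs Hu. nsatz. }
  assert (derive_X : forall t, derivable_pt_lim X t (- Y t)).
  { intros t. unfold X, Y.
    replace (- (- sa * cos t + ca * sin t)) with (ca * (- sin t) + sa * cos t) by ring.
    apply derivable_pt_lim_plus; apply derivable_pt_lim_scal;
      [apply derivable_pt_lim_cos | apply derivable_pt_lim_sin]. }
  assert (derive_Y : forall t, derivable_pt_lim Y t (X t)).
  { intros t. unfold X, Y.
    replace (ca * cos t + sa * sin t) with (- sa * (- sin t) + ca * cos t) by ring.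
    apply derivable_pt_lim_plus; apply derivable_pt_lim_scal;
      [apply derivable_pt_lim_cos | apply derivable_pt_lim_sin]. }
  exact (poly_pair_eq0_on_rotation X Y XY_unit derive_X derive_Y G0 G1 t0 t1 P0 P1 Ht Hid).
Qed.

Lemma polar_form p q : 0 < p * p + q * q ->
  exists rho ca sa, 0 < rho /\ ca * ca + sa * sa = 1 /\ p = rho * ca /\ q = rho * sa.
Proof.
  intros Hpq. set (rho := sqrt (p * p + q * q)).
  assert (Hrho : 0 < rho) by (apply sqrt_lt_R0; exact Hpq).
  assert (Hrr : rho * rho = p * p + q * q) by (apply sqrt_sqrt; lra).
  exists rho, (p / rho), (q / rho). repeat split; auto; try (field; lra).
  apply (Rmult_eq_reg_r (rho * rho)); [field_simplify; lra | nra].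
Qed.

(* The right-hand side is even in [u], so the odd part [2 n (m u - r u^3)] of the left-hand side
   vanishes; this forces [n = 0], and then [u = 0] gives [k = 0]. *)
Lemma cubic_sq_ne_cube r m n k : r <> 0 -> k <> 0 ->
  ~ (forall u, (- r * u ^ 3 + m * u + n) ^ 2 = k ^ 2 * (1 + u * u) ^ 3).
Proof.
  intros Hr Hk Ev.
  pose proof (Ev 0) as E0. pose proof (Ev 1) as E1. pose proof (Ev (-1)) as E2.
  pose proof (Ev 2) as E3. pose proof (Ev (-2)) as E4.
  assert (A1 : n * (m - r) = 0) by nra.
  assert (A2 : n * (2 * m - 8 * r) = 0) by nra.
  assert (Hn : n = 0).
  { destruct (Rmult_integral _ _ A1); auto. destruct (Rmult_integral _ _ A2); auto. lra. }
  subst n. apply Hk. nra.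
Qed.

Lemma phi_mean_curv_circle p q r r1 a2 b2 r2 co si k :
  co * co + si * si = 1 -> 0 < r ->
  phi_mean_curv (mkR3 (p + r1 * co) (q + r1 * si) 1) (mkR3 (- (r * si)) (r * co) 0)
    (mkR3 (a2 + r2 * co) (b2 + r2 * si) 0) (mkR3 (- (r1 * si)) (r1 * co) 0)
    (mkR3 (- (r * co)) (- (r * si)) 0) = k ->
  let u := p * co + q * si + r1 in
  1 + p * p + q * q + r1 * r1 + 2 * r1 * (p * co + q * si) - r * (a2 * co + b2 * si + r2)
    - r * u * (1 + u * u)
  = 2 * k * r * (1 + u * u) * sqrt (1 + u * u).
Proof.
  intros Hcs Hr Hk u.
  assert (Hu : u = p * co + q * si + r1) by reflexivity. clearbody u.
  assert (HW : 0 < 1 + u * u) by nra.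
  assert (HS : 0 < sqrt (1 + u * u)) by (apply sqrt_lt_R0; exact HW).
  assert (HSS : sqrt (1 + u * u) * sqrt (1 + u * u) = 1 + u * u) by (apply sqrt_sqrt; lra).
  revert Hk HS HSS. generalize (sqrt (1 + u * u)). intros S Hk HS HSS.
  unfold phi_mean_curv, mean_curv, unit_normal in Hk.
  assert (Hcross : cross (mkR3 (p + r1 * co) (q + r1 * si) 1) (mkR3 (- (r * si)) (r * co) 0)
                   = mkR3 (- (r * co)) (- (r * si)) (r * u)).
  { unfold cross; simpl; f_equal; [ring | ring | subst u; clear - Hcs; nsatz]. }
  assert (Hnorm : vnorm (mkR3 (- (r * co)) (- (r * si)) (r * u)) = r * S).
  { unfold vnorm, dot; simpl.
    replace (- (r * co) * - (r * co) + - (r * si) * - (r * si) + r * u * (r * u))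
      with ((r * S) * (r * S)) by (subst u; clear - Hcs HSS; nsatz).
    apply sqrt_square; nra. }
  rewrite Hcross, Hnorm in Hk. unfold vscale, dot in Hk; simpl in Hk.
  match type of Hk with context [_ / (2 * ?D)] =>
    assert (HD : D = r * r * (1 + u * u)) by (subst u; clear - Hcs; nsatz); rewrite HD in Hk end.
  subst k. field_simplify_eq; [| repeat split; apply Rgt_not_eq; lra].
  clear - Hcs. simpl. nsatz.
Qed.

Lemma rotated_identity_absurd rho r1 r r2 lam mu k : 0 < rho -> 0 < r -> k <> 0 ->
  let W := fun z => 1 + (rho * z + r1) * (rho * z + r1) in
  let Q := fun z => 1 + rho * rho + r1 * r1 + 2 * r1 * rho * z - r * (lam * z + r2)
                    - r * (rho * z + r1) * W z in
  ~ (forall z, Q z * Q z + r * r * mu * mu * (1 - z * z) - k * k * (W z * W z * W z) = 0 /\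
               -2 * r * mu * Q z = 0).
Proof.
  intros Hrho Hr Hk W Q Gz.
  destruct (Req_dec mu 0) as [Hmu | Hmu].
  - apply (cubic_sq_ne_cube r (2 * r1 - r * lam / rho - r)
             (1 + rho * rho - r1 * r1 + r * lam * r1 / rho - r * r2) k); [lra | exact Hk |].
    intros u. destruct (Gz ((u - r1) / rho)) as [E _].
    unfold Q, W in E. rewrite Hmu in E.
    replace (rho * ((u - r1) / rho) + r1) with u in E by (field; lra).
    apply Rminus_diag_uniq. rewrite <- E. field. lra.
  - assert (Q1 : Q 1 = 0).
    { destruct (Gz 1) as [_ E].
      destruct (Rmult_integral _ _ E) as [E' | E']; [| exact E'].
      apply Rmult_integral in E' as [E' | E']; [lra | contradiction]. }
    destruct (Gz 1) as [E _]. rewrite Q1 in E.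
    assert (W1 : 1 <= W 1)
      by (unfold W; pose proof (Rle_0_sqr (rho * 1 + r1)); unfold Rsqr in *; lra).
    assert (W3 : 1 <= W 1 * W 1 * W 1).
    { replace 1 with (1 * 1 * 1) at 1 by ring.
      apply Rmult_le_compat; try apply Rmult_le_compat; lra. }
    assert (Hk2 : 0 < k * k) by (apply Rsqr_pos_lt; exact Hk).
    assert (0 < k * k * (W 1 * W 1 * W 1)) by (apply Rmult_lt_0_compat; lra).
    replace (1 - 1 * 1) with 0 in E by ring. lra.
Qed.

Lemma center_velocity_eq0 p q r r1 a2 b2 r2 k t0 t1 :
  t0 < t1 -> 0 < r -> k <> 0 ->
  (forall t, t0 < t < t1 ->
     let u := p * cos t + q * sin t + r1 in
     1 + p * p + q * q + r1 * r1 + 2 * r1 * (p * cos t + q * sin t)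
       - r * (a2 * cos t + b2 * sin t + r2) - r * u * (1 + u * u)
     = k * (1 + u * u) * sqrt (1 + u * u)) ->
  p = 0 /\ q = 0.
Proof.
  intros Ht Hr Hk Hid.
  destruct (Req_dec (p * p + q * q) 0) as [H0 | H0]; [split; nra | exfalso].
  destruct (polar_form p q) as [rho [ca [sa [Hrho [Hcs [-> ->]]]]]]; [nra |].
  set (lam := a2 * ca + b2 * sa). set (mu := - a2 * sa + b2 * ca).
  set (W := fun z => 1 + (rho * z + r1) * (rho * z + r1)).
  set (Q := fun z => 1 + rho * rho + r1 * r1 + 2 * r1 * rho * z - r * (lam * z + r2)
                     - r * (rho * z + r1) * W z).
  set (G0 := fun z => Q z * Q z + r * r * mu * mu * (1 - z * z) - k * k * (W z * W z * W z)).
  set (G1 := fun z => -2 * r * mu * Q z).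
  (* With [X = ca cos t + sa sin t] and [Y = - sa cos t + ca sin t] the left-hand side of the
     identity is [Q X - r mu Y] and [1 + u^2 = W X]; squaring it gives [G0 X + Y G1 X = 0]. *)
  assert (Gz : forall z, G0 z = 0 /\ G1 z = 0).
  { apply (poly_pair_eq0_on_arc G0 G1 ca sa t0 t1); auto;
      [unfold G0, Q, W; is_poly_tac | unfold G1, Q, W; is_poly_tac |].
    intros t Htt. specialize (Hid t Htt). cbv zeta in Hid.
    pose proof (cos_sin_unit t) as Hu.
    set (X := ca * cos t + sa * sin t). set (Y := - sa * cos t + ca * sin t).
    replace (rho * ca * cos t + rho * sa * sin t + r1) with (rho * X + r1) in Hid by (unfold X; ring).
    change (1 + (rho * X + r1) * (rho * X + r1)) with (W X) in Hid.
    match type of Hid with ?N = _ =>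
      replace N with (Q X - r * mu * Y) in Hid
        by (unfold Q, W, lam, mu, X, Y; clear - Hcs; simpl; nsatz) end.
    assert (HSS : sqrt (W X) * sqrt (W X) = W X)
      by (apply sqrt_sqrt; unfold W; pose proof (Rle_0_sqr (rho * X + r1)); unfold Rsqr in *; lra).
    assert (HXY : 1 - X * X = Y * Y) by (unfold X, Y; clear - Hcs Hu; nsatz).
    unfold G0, G1. rewrite HXY.
    transitivity ((Q X - r * mu * Y) * (Q X - r * mu * Y) - k * k * (W X * W X * W X)); [ring |].
    rewrite Hid. transitivity (k * k * W X * W X * (sqrt (W X) * sqrt (W X) - W X)); [ring |].
    rewrite HSS. ring. }
  exact (rotated_identity_absurd rho r1 r r2 lam mu k Hrho Hr Hk Gz).
Qed.

Lemma R3_ext u v : v1 u = v1 v -> v2 u = v2 v -> v3 u = v3 v -> u = v.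
Proof. destruct u, v; simpl; intros -> -> ->; reflexivity. Qed.

Lemma partial_s_locally_unique X Y lo hi s t v w :
  lo < s < hi -> (forall u, lo < u < hi -> X u t = Y u t) ->
  partial_s X s t v -> partial_s Y s t w -> v = w.
Proof.
  intros Hs HXY [Hv1 [Hv2 Hv3]] [Hw1 [Hw2 Hw3]].
  apply R3_ext; eapply uniqueness_limite; try eassumption;
    eapply derivable_pt_lim_locally_ext; try eassumption;
    intros u Hu; cbv beta; rewrite HXY; auto.
Qed.

Lemma partial_t_locally_unique X Y lo hi s t v w :
  lo < t < hi -> (forall u, lo < u < hi -> X s u = Y s u) ->
  partial_t X s t v -> partial_t Y s t w -> v = w.
Proof.
  intros Ht HXY [Hv1 [Hv2 Hv3]] [Hw1 [Hw2 Hw3]].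
  apply R3_ext; eapply uniqueness_limite; try eassumption;
    eapply derivable_pt_lim_locally_ext; try eassumption;
    intros u Hu; cbv beta; rewrite HXY; auto.
Qed.

Definition circle_field (a b r h : R -> R) (s t : R) : R3 :=
  mkR3 (a s + r s * cos t) (b s + r s * sin t) (h s).

Definition circle_tangent (r : R -> R) (s t : R) : R3 :=
  mkR3 (- (r s * sin t)) (r s * cos t) 0.

Lemma derivable_pt_lim_affine_cst f g f' g' k x :
  derivable_pt_lim f x f' -> derivable_pt_lim g x g' ->
  derivable_pt_lim (fun u => f u + g u * k) x (f' + g' * k).
Proof.
  intros Hf Hg. replace (f' + g' * k) with (f' + (g' * k + g x * 0)) by ring.
  apply derivable_pt_lim_plus; [exact Hf |].
  apply derivable_pt_lim_mult; [exact Hg | apply derivable_pt_lim_const].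
Qed.

Lemma partial_s_circle_field a b r h a' b' r' h' s t :
  derivable_pt_lim a s a' -> derivable_pt_lim b s b' ->
  derivable_pt_lim r s r' -> derivable_pt_lim h s h' ->
  partial_s (circle_field a b r h) s t (mkR3 (a' + r' * cos t) (b' + r' * sin t) h').
Proof. intros; repeat split; simpl; auto using derivable_pt_lim_affine_cst. Qed.

Lemma partial_t_circle_field a b r h s t :
  partial_t (circle_field a b r h) s t (circle_tangent r s t).
Proof.
  repeat split; simpl.
  - replace (- (r s * sin t)) with (0 + r s * - sin t) by ring.
    apply derivable_pt_lim_plus;
      [apply derivable_pt_lim_const | apply derivable_pt_lim_scal, derivable_pt_lim_cos].
  - replace (r s * cos t) with (0 + r s * cos t) by ring.
    apply derivable_pt_lim_plus;
      [apply derivable_pt_lim_const | apply derivable_pt_lim_scal, derivable_pt_lim_sin].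
  - apply derivable_pt_lim_const.
Qed.

Lemma partial_t_circle_tangent r s t :
  partial_t (circle_tangent r) s t (mkR3 (- (r s * cos t)) (- (r s * sin t)) 0).
Proof.
  repeat split; simpl.
  - apply derivable_pt_lim_opp, derivable_pt_lim_scal, derivable_pt_lim_sin.
  - replace (- (r s * sin t)) with (r s * - sin t) by ring.
    apply derivable_pt_lim_scal, derivable_pt_lim_cos.
  - apply derivable_pt_lim_const.
Qed.

Section CircleFoliation.

Variables (a b r a1 b1 r1 a2 b2 r2 : R -> R) (s0 s1 t0 t1 c : R).
Variables Xs Xt Xss Xst Xtt : R -> R -> R3.

Hypothesis derive_a : forall s, s0 < s < s1 -> derivable_pt_lim a s (a1 s).
Hypothesis derive_b : forall s, s0 < s < s1 -> derivable_pt_lim b s (b1 s).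
Hypothesis derive_r : forall s, s0 < s < s1 -> derivable_pt_lim r s (r1 s).
Hypothesis derive_a1 : forall s, s0 < s < s1 -> derivable_pt_lim a1 s (a2 s).
Hypothesis derive_b1 : forall s, s0 < s < s1 -> derivable_pt_lim b1 s (b2 s).
Hypothesis derive_r1 : forall s, s0 < s < s1 -> derivable_pt_lim r1 s (r2 s).
Hypothesis partials : forall s t, s0 < s < s1 -> t0 < t < t1 ->
  partial_s (circ_param a b r) s t (Xs s t) /\
  partial_t (circ_param a b r) s t (Xt s t) /\
  partial_s Xs s t (Xss s t) /\
  partial_t Xs s t (Xst s t) /\
  partial_t Xt s t (Xtt s t).

Lemma Xs_eq s t : s0 < s < s1 -> t0 < t < t1 ->
  Xs s t = circle_field a1 b1 r1 (fun _ => 1) s t.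
Proof.
  intros Hs Ht. destruct (partials s t Hs Ht) as [P _].
  apply (partial_s_locally_unique (circ_param a b r) (circle_field a b r (fun s => s)) s0 s1 s t);
    auto.
  apply partial_s_circle_field; auto using derivable_pt_lim_id.
Qed.

Lemma Xt_eq s t : s0 < s < s1 -> t0 < t < t1 -> Xt s t = circle_tangent r s t.
Proof.
  intros Hs Ht. destruct (partials s t Hs Ht) as [_ [P _]].
  apply (partial_t_locally_unique (circ_param a b r) (circle_field a b r (fun s => s)) t0 t1 s t);
    auto using partial_t_circle_field.
Qed.

Lemma Xss_eq s t : s0 < s < s1 -> t0 < t < t1 ->
  Xss s t = circle_field a2 b2 r2 (fun _ => 0) s t.
Proof.
  intros Hs Ht. destruct (partials s t Hs Ht) as [_ [_ [P _]]].
  apply (partial_s_locally_unique Xs (circle_field a1 b1 r1 (fun _ => 1)) s0 s1 s t);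
    auto using Xs_eq.
  apply partial_s_circle_field; auto. apply derivable_pt_lim_const.
Qed.

Lemma Xst_eq s t : s0 < s < s1 -> t0 < t < t1 -> Xst s t = circle_tangent r1 s t.
Proof.
  intros Hs Ht. destruct (partials s t Hs Ht) as [_ [_ [_ [P _]]]].
  apply (partial_t_locally_unique Xs (circle_field a1 b1 r1 (fun _ => 1)) t0 t1 s t);
    auto using Xs_eq, partial_t_circle_field.
Qed.

Lemma Xtt_eq s t : s0 < s < s1 -> t0 < t < t1 ->
  Xtt s t = mkR3 (- (r s * cos t)) (- (r s * sin t)) 0.
Proof.
  intros Hs Ht. destruct (partials s t Hs Ht) as [_ [_ [_ [_ P]]]].
  apply (partial_t_locally_unique Xt (circle_tangent r) t0 t1 s t);
    auto using Xt_eq, partial_t_circle_tangent.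
Qed.

Lemma circle_centers_still s : s0 < s < s1 -> t0 < t1 -> 0 < r s -> c <> 0 ->
  (forall t, t0 < t < t1 -> phi_mean_curv (Xs s t) (Xt s t) (Xss s t) (Xst s t) (Xtt s t) = c) ->
  a1 s = 0 /\ b1 s = 0.
Proof.
  intros Hs Ht Hr Hc Hphi.
  apply (center_velocity_eq0 _ _ (r s) (r1 s) (a2 s) (b2 s) (r2 s) (2 * c * r s) t0 t1 Ht Hr).
  { apply Rmult_integral_contrapositive_currified; [apply Rmult_integral_contrapositive_currified |];
      lra. }
  intros t Htt. specialize (Hphi t Htt).
  rewrite Xs_eq, Xt_eq, Xss_eq, Xst_eq, Xtt_eq in Hphi by assumption.
  exact (phi_mean_curv_circle _ _ _ _ _ _ _ _ _ _ (cos_sin_unit t) Hr Hphi).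
Qed.

End CircleFoliation.

Lemma smooth_on_derivable2 f lo hi : smooth_on f lo hi ->
  exists f1 f2, (forall x, lo < x < hi -> derivable_pt_lim f x (f1 x)) /\
                (forall x, lo < x < hi -> derivable_pt_lim f1 x (f2 x)).
Proof.
  intros [D [D0 HD]]. exists (D 1%nat), (D 2%nat). split; intros x Hx; [| exact (HD 1%nat x Hx)].
  apply derivable_pt_lim_ext with (D 0%nat); [exact D0 | exact (HD 0%nat x Hx)].
Qed.

Theorem theorem6 (a b r : R -> R) (s0 s1 t0 t1 : R) (c : R)
  (Xs Xt Xss Xst Xtt : R -> R -> R3) :
  s0 < s1 -> t0 < t1 ->
  smooth_on a s0 s1 -> smooth_on b s0 s1 -> smooth_on r s0 s1 ->
  (forall s, s0 < s < s1 -> 0 < r s) ->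
  (forall s t, s0 < s < s1 -> t0 < t < t1 ->
     partial_s (circ_param a b r) s t (Xs s t) /\
     partial_t (circ_param a b r) s t (Xt s t) /\
     partial_s Xs s t (Xss s t) /\
     partial_t Xs s t (Xst s t) /\
     partial_t Xt s t (Xtt s t)) ->
  c <> 0 ->
  (forall s t, s0 < s < s1 -> t0 < t < t1 ->
     phi_mean_curv (Xs s t) (Xt s t) (Xss s t) (Xst s t) (Xtt s t) = c) ->
  exists x0 y0 : R, forall s, s0 < s < s1 -> a s = x0 /\ b s = y0.
Proof.
  intros Hs Ht Sa Sb Sr Hr Hpartials Hc Hphi.
  destruct (smooth_on_derivable2 _ _ _ Sa) as [a1 [a2 [Da1 Da2]]].
  destruct (smooth_on_derivable2 _ _ _ Sb) as [b1 [b2 [Db1 Db2]]].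
  destruct (smooth_on_derivable2 _ _ _ Sr) as [r1 [r2 [Dr1 Dr2]]].
  assert (Hstill : forall s, s0 < s < s1 -> a1 s = 0 /\ b1 s = 0).
  { intros s Hs'.
    apply (circle_centers_still a b r a1 b1 r1 a2 b2 r2 s0 s1 t0 t1 c Xs Xt Xss Xst Xtt);
      auto. }
  set (m := (s0 + s1) / 2). assert (Hm : s0 < m < s1) by (unfold m; lra).
  exists (a m), (b m). intros s Hs'. split.
  - apply (const_of_derive_0 a a1 s0 s1); auto. intros; apply Hstill; assumption.
  - apply (const_of_derive_0 b b1 s0 s1); auto. intros; apply Hstill; assumption.
Qed.
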